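(* For every $p\ge 1$, the joint distribution of the endhered patterns $\pi=12\cdots p$ and $\tau=p\cdots 21$ is symmetric: $a_{n,k,m}(\pi,\tau)=a_{n,k,m}(\tau,\pi)$ for all $n,k,m$. In particular, the number of matchings of size $n$ containing exactly $k$ occurrences of $21$ and exactly $m$ occurrences of $12$ equals the number of matchings of size $n$ containing exactly $m$ occurrences of $21$ and exactly $k$ occurrences of $12$.
   Context: A matching of size $n$ is a set of $n$ arcs $(a,b)$ with $1\le a<b\le 2n$ such that each point of $\{1,\dots,2n\}$ belongs to exactly one arc; $a$ is the starting point and $b$ the ending point. An endhered pattern of size $p$ is identified with a permutation $\pi=\pi_1\dots\pi_p$ of $\{1,\dots,p\}$ (the matching on $\{1,\dots,2p\}$ whose arc ending at $p+t$ starts at $\pi_t$). A matching $\mu$ contains $\pi$ at position $(i+1,j+1)$ (integers $i\ge0$, $j\ge i+p$) if for each $s=1,\dots,p$ the pair $(i+s,\,j+\pi^{-1}(s))$ is an arc of $\mu$. Thus an occurrence of $21$ is a pair of arcs $(i+1,j+2),(i+2,j+1)$ and an occurrence of $12$ is a pair of arcs $(i+1,j+1),(i+2,j+2)$. The number of occurrences of $\pi$ in $\mu$ is the number of positions at which $\mu$ contains $\pi$; $a_{n,k,m}(\pi,\tau)$ is the number of matchings of size $n$ with exactly $k$ occurrences of $\pi$ and exactly $m$ occurrences of $\tau$. *)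

From mathcomp Require Import all_boot all_fingroup.
Set Implicit Arguments. Unset Strict Implicit. Unset Printing Implicit Defensive.

(* A matching of size n on the points {1,...,2n}, encoded 0-based:
   the point x (1 <= x <= 2n) is represented by the ordinal x-1 : 'I_(2n),
   and mu x is the partner of x. *)
Definition matching_fun (n : nat) := {ffun 'I_(2 * n) -> 'I_(2 * n)}.

Definition is_matching (n : nat) (mu : matching_fun n) : bool :=
  [forall x, (mu (mu x) == x) && (mu x != x)].

Definition arc (n : nat) (mu : matching_fun n) (a b : nat) : bool :=
  [&& 0 < a, a < b, b <= 2 * n &
   [exists x : 'I_(2 * n), (val x == a.-1) && (val (mu x) == b.-1)]].

(* An endhered pattern of size p is a permutation of {1..p}, encoded as a
   permutation of 'I_p (pi_t = val (pi (t-1)) + 1). *)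
Definition pattern (p : nat) := {perm 'I_p}.

(* mu contains pi at position (i+1, j+1), j >= i + p:
   for each s = 1..p, (i + s, j + pi^{-1}(s)) is an arc of mu.
   With s = s'+1, s' : 'I_p, pi^{-1}(s) = val (pi^-1 s') + 1. *)
Definition contains_at (p n : nat) (pi : pattern p) (mu : matching_fun n)
    (i j : nat) : bool :=
  (i + p <= j) &&
  [forall s : 'I_p, arc mu (i + s.+1) (j + (val ((pi^-1)%g s)).+1)].

(* Number of occurrences: number of positions (i+1, j+1).  Any occurrence
   (p >= 1) has i, j <= 2n, so ranging over 'I_(2n+1) loses nothing. *)
Definition occ (p n : nat) (pi : pattern p) (mu : matching_fun n) : nat :=
  #|[set ij : 'I_(2 * n).+1 * 'I_(2 * n).+1 | contains_at pi mu ij.1 ij.2]|.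

Definition a_count (p n k m : nat) (pi tau : pattern p) : nat :=
  #|[set mu : matching_fun n |
      [&& is_matching mu, occ pi mu == k & occ tau mu == m]]|.

Definition inc_pat (p : nat) : pattern p := 1%g.
Definition dec_pat (p : nat) : pattern p := perm (@rev_ord_inj p).

From Pilot Require Import Defs.
From mathcomp Require Import all_boot all_fingroup.
From mathcomp Require Import zify.
Set Implicit Arguments. Unset Strict Implicit. Unset Printing Implicit Defensive.

(* Call a point of a matching an opener if it is the starting point of its
   arc.  Reversing the order of the openers inside every maximal run of
   consecutive openers, closers staying fixed, conjugates the matching by an
   involutive permutation that preserves the set of openers; hence it maps
   matchings to matchings and is itself an involution.  The p starting points
   of an occurrence of an endhered pattern pi are consecutive openers, so they
   lie in a single run, are reversed as a block, and the occurrence becomes an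
   occurrence of pi composed with the reversal of 1..p.  Thus the involution
   exchanges the numbers of occurrences of 12...p and p...21. *)

Section RunReflection.

Variables (N : nat) (op : pred nat).

Fixpoint run_start k := if k is k'.+1 then (if op k' then run_start k' else k) else 0.

Fixpoint run_end_rec fuel k :=
  if fuel is f.+1 then (if op k.+1 then run_end_rec f k.+1 else k) else k.

(* N - k steps suffice once op holds only below N (hypothesis op_lt). *)
Definition run_end k := run_end_rec (N - k) k.

Definition run_reflect k := if op k then run_start k + run_end k - k else k.

Lemma run_start_le k : run_start k <= k.
Proof. by elim: k => //= k IH; case: (op k) => //; apply: leqW. Qed.

Lemma run_end_ge k : k <= run_end k.
Proof.
rewrite /run_end; move: (N - k) => f; elim: f k => //= f IH k.
by case: (op k.+1) => //; apply: ltnW (IH k.+1).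
Qed.

Lemma op_run_start k u : run_start k <= u < k -> op u.
Proof.
elim: k => [|k IH] /=; first by rewrite ltn0.
case hk: (op k) => /andP[su uk]; last lia.
by have [-> //|ne] := eqVneq u k; apply: IH; lia.
Qed.

Lemma op_run_end k u : k < u <= run_end k -> op u.
Proof.
rewrite /run_end; move: (N - k) => f; elim: f k => [|f IH] k /=; first lia.
case hk: (op k.+1) => /andP[ku uf]; last lia.
by have [-> //|ne] := eqVneq u k.+1; apply: (IH k.+1); lia.
Qed.

Lemma run_reflect_out k : ~~ op k -> run_reflect k = k.
Proof. by rewrite /run_reflect => /negbTE ->. Qed.

Hypothesis op_lt : forall k, op k -> k < N.

Lemma run_endE k : run_end k = if op k.+1 then run_end k.+1 else k.
Proof.
rewrite /run_end; case hk: (op k.+1); last by case: (N - k) => //= f; rewrite hk.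
have -> : N - k = (N - k.+1).+1 by have := op_lt hk; lia.
by rewrite /= hk.
Qed.

Lemma run_interval y t : (forall u, y <= u <= y + t -> op u) ->
  run_start (y + t) = run_start y /\ run_end y = run_end (y + t).
Proof.
elim: t => [|t IH] hop; first by rewrite addn0.
have [<- ->] : run_start (y + t) = run_start y /\ run_end y = run_end (y + t).
  by apply: IH => u hu; apply: hop; lia.
have h1 : op (y + t) by apply: hop; lia.
have h2 : op (y + t).+1 by apply: hop; lia.
by rewrite addnS /= h1 (run_endE (y + t)) h2.
Qed.

Lemma op_run k u : op k -> run_start k <= u <= run_end k -> op u.
Proof.
move=> hk /andP[su ue]; case: (ltngtP u k) => [uk|ku|-> //].
- by apply: (@op_run_start k); rewrite su uk.
- by apply: (@op_run_end k); rewrite ku ue.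
Qed.

Lemma same_run k u : op k -> run_start k <= u <= run_end k ->
  run_start u = run_start k /\ run_end u = run_end k.
Proof.
move=> hk hu; have := run_start_le k; have := run_end_ge k => ek sk.
have oprun v : run_start k <= v <= run_end k -> op v by exact: op_run.
case: (leqP u k) => [uk|ku].
- have := @run_interval u (k - u); rewrite subnKC // => -[|-> ->] //.
  by move=> v hv; apply: oprun; lia.
- have := @run_interval k (u - k); rewrite subnKC ?(ltnW ku) // => -[|-> ->] //.
  by move=> v hv; apply: oprun; lia.
Qed.

Lemma run_reflect_bounds k : op k -> run_start k <= run_reflect k <= run_end k.
Proof.
by move=> hk; rewrite /run_reflect hk; have := run_start_le k; have := run_end_ge k; lia.
Qed.

Lemma op_run_reflect k : op (run_reflect k) = op k.
Proof.
case hk: (op k); last by rewrite run_reflect_out ?hk.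
exact: op_run hk (run_reflect_bounds hk).
Qed.

Lemma run_reflectK : involutive run_reflect.
Proof.
move=> k; case hk: (op k); last by rewrite !run_reflect_out ?hk.
have bk := run_reflect_bounds hk; have [hs he] := same_run hk bk.
rewrite {1}/run_reflect op_run_reflect hk hs he.
have := run_start_le k; have := run_end_ge k.
by rewrite /run_reflect hk; lia.
Qed.

Lemma run_reflect_shift y t : (forall u, y <= u <= y + t -> op u) ->
  run_reflect y = run_reflect (y + t) + t.
Proof.
move=> hop; have [hs he] := run_interval hop.
have hy : op y by apply: hop; lia.
have hyt : op (y + t) by apply: hop; lia.
have := run_end_ge (y + t); have := run_start_le y.
by rewrite /run_reflect hy hyt hs -he; lia.
Qed.

Lemma run_reflect_lt y z : op y -> ~~ op z -> y < z -> run_reflect y < z.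
Proof.
move=> hy hz yz; have /andP[_ le_end] := run_reflect_bounds hy.
apply: leq_ltn_trans le_end _; rewrite ltnNge; apply: contra hz => ze.
by apply: (@op_run_end y); rewrite yz.
Qed.

End RunReflection.

Lemma eq_run_reflect N op1 op2 : op1 =1 op2 -> run_reflect N op1 =1 run_reflect N op2.
Proof.
move=> e k.
have es : run_start op1 =1 run_start op2 by elim=> //= m ->; rewrite e.
have ee f : run_end_rec op1 f =1 run_end_rec op2 f by elim: f => //= f IH m; rewrite e IH.
by rewrite /run_reflect /run_end e es ee.
Qed.

Section ReflectRuns.

Variable n : nat.
Implicit Types (mu : matching_fun n) (x : 'I_(2 * n)).

Definition opener mu k := [exists x : 'I_(2 * n), (x == k :> nat) && (x < mu x)].

Lemma openerE mu x : opener mu x = (x < mu x).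
Proof.
apply/existsP/idP => [[y /andP[/eqP yx]]|]; last by exists x; rewrite eqxx.
by rewrite (val_inj yx).
Qed.

Lemma opener_lt mu k : opener mu k -> k < 2 * n.
Proof. by case/existsP => x /andP[/eqP <- _]. Qed.

Definition reflect_ord mu (x : 'I_(2 * n)) : 'I_(2 * n) :=
  insubd x (run_reflect (2 * n) (opener mu) x).

Lemma reflect_ordE mu x : reflect_ord mu x = run_reflect (2 * n) (opener mu) x :> nat.
Proof.
rewrite val_insubd; case hx: (opener mu x).
  by rewrite -(op_run_reflect (2 * n)) in hx; rewrite (opener_lt hx).
by rewrite run_reflect_out ?hx ?ltn_ord.
Qed.

Lemma reflect_ordK mu : involutive (reflect_ord mu).
Proof.
move=> x; apply: val_inj => /=.
by rewrite !reflect_ordE run_reflectK //; apply: opener_lt.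
Qed.

Lemma opener_reflect_ord mu x :
  (reflect_ord mu x < mu (reflect_ord mu x)) = (x < mu x).
Proof. by rewrite -!openerE reflect_ordE op_run_reflect. Qed.

Lemma reflect_ord_id mu x : ~~ (x < mu x) -> reflect_ord mu x = x.
Proof.
by move=> hx; apply: val_inj => /=; rewrite reflect_ordE run_reflect_out ?openerE.
Qed.

Definition reflect_runs mu : matching_fun n :=
  if is_matching mu then [ffun x => reflect_ord mu (mu (reflect_ord mu x))] else mu.

Lemma arcE mu a b :
  Defs.arc mu a.+1 b.+1 =
  [exists x : 'I_(2 * n), [&& x == a :> nat, mu x == b :> nat & x < mu x]].
Proof.
rewrite /Defs.arc /=; apply/and3P/existsP => [[ab _ /existsP[x /andP[/eqP xa /eqP xb]]]|].
  by exists x; rewrite xa xb !eqxx.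
case=> x /and3P[/eqP xa /eqP xb xmx]; split.
- by rewrite ltnS -xa -xb.
- by rewrite -xb.
- by apply/existsP; exists x; rewrite xa xb !eqxx.
Qed.

Lemma arc_opener mu a b : Defs.arc mu a.+1 b.+1 -> opener mu a.
Proof.
by rewrite arcE => /existsP[x /and3P[xa _ xmx]]; apply/existsP; exists x; rewrite xa.
Qed.

Section Matching.

Variable mu : matching_fun n.
Hypothesis mu_matching : is_matching mu.

Lemma matchingK : involutive mu.
Proof. by move=> x; move/forallP: mu_matching => /(_ x) /andP[/eqP]. Qed.

Lemma matching_neq x : mu x != x.
Proof. by move/forallP: mu_matching => /(_ x) /andP[]. Qed.

Lemma partner_closer x : x < mu x -> ~~ (mu x < mu (mu x)).
Proof. by rewrite matchingK -leqNgt; apply: ltnW. Qed.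

Lemma arc_closer a b : Defs.arc mu a.+1 b.+1 -> ~~ opener mu b.
Proof.
rewrite arcE => /existsP[x /and3P[_ /eqP <- xmx]].
by rewrite openerE partner_closer.
Qed.

Lemma reflect_runsE x : reflect_runs mu x = reflect_ord mu (mu (reflect_ord mu x)).
Proof. by rewrite /reflect_runs mu_matching ffunE. Qed.

Lemma reflect_runs_opener x : x < mu x -> reflect_runs mu x = mu (reflect_ord mu x).
Proof.
by move=> hx; rewrite reflect_runsE reflect_ord_id // partner_closer ?opener_reflect_ord.
Qed.

Lemma opener_reflect_runs_ord x : (x < reflect_runs mu x) = (x < mu x).
Proof.
case: (ltnP x (mu x)) => hx.
  rewrite reflect_runs_opener //; set y := reflect_ord mu x.
  have hy : y < mu y by rewrite opener_reflect_ord.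
  rewrite -{1}(reflect_ordK mu x) -/y reflect_ordE.
  by apply: run_reflect_lt; rewrite ?openerE ?partner_closer.
have xmx : mu x < x by rewrite ltn_neqAle hx andbT; apply: matching_neq.
rewrite reflect_runsE (@reflect_ord_id _ x) -?leqNgt //.
apply/negbTE; rewrite -leqNgt ltnW // reflect_ordE.
by apply: run_reflect_lt; rewrite ?openerE ?matchingK // -leqNgt.
Qed.

Lemma opener_reflect_runs : opener (reflect_runs mu) =1 opener mu.
Proof. by move=> k; apply: eq_existsb => x; rewrite opener_reflect_runs_ord. Qed.

Lemma reflect_ord_reflect_runs : reflect_ord (reflect_runs mu) =1 reflect_ord mu.
Proof.
move=> x; apply: val_inj => /=; rewrite !reflect_ordE.
exact: eq_run_reflect opener_reflect_runs _.
Qed.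

Lemma reflect_runs_matching : is_matching (reflect_runs mu).
Proof.
apply/forallP => x; rewrite !reflect_runsE reflect_ordK matchingK reflect_ordK eqxx /=.
apply/eqP => /(congr1 (reflect_ord mu)); rewrite reflect_ordK.
exact/eqP/matching_neq.
Qed.

Lemma arc_reflect_runs a b :
  Defs.arc (reflect_runs mu) a.+1 b.+1 =
  Defs.arc mu (run_reflect (2 * n) (opener mu) a).+1 b.+1.
Proof.
rewrite !arcE; apply/existsP/existsP => [[x]|[y]].
  rewrite opener_reflect_runs_ord => /and3P[/eqP xa /eqP xb hx].
  exists (reflect_ord mu x).
  by rewrite opener_reflect_ord hx -reflect_runs_opener // xb reflect_ordE xa !eqxx.
move=> /and3P[/eqP ya /eqP yb hy]; exists (reflect_ord mu y).
rewrite opener_reflect_runs_ord opener_reflect_ord hy.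
rewrite reflect_runs_opener ?opener_reflect_ord // reflect_ordK yb eqxx.
by rewrite reflect_ordE ya run_reflectK ?eqxx //; apply: opener_lt.
Qed.

End Matching.

Lemma reflect_runsK : involutive reflect_runs.
Proof.
move=> mu; case hmu: (is_matching mu); last by rewrite /reflect_runs hmu hmu.
apply/ffunP => x; rewrite {1}/reflect_runs reflect_runs_matching // ffunE.
by rewrite !reflect_ord_reflect_runs // reflect_runsE // !reflect_ordK.
Qed.

End ReflectRuns.

Lemma dec_patE p (s : 'I_p) : dec_pat p s = rev_ord s.
Proof. by rewrite permE. Qed.

Lemma dec_pat_invg p : ((dec_pat p)^-1)%g = dec_pat p.
Proof.
apply/permP => s; apply: (@perm_inj _ (dec_pat p)).
by rewrite permKV !dec_patE rev_ordK.
Qed.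

Lemma mulg_dec_patK p (pi : pattern p) : (pi * dec_pat p * dec_pat p)%g = pi.
Proof. by rewrite -mulgA -{1}dec_pat_invg mulVg mulg1. Qed.

Lemma contains_atE n p (pi : pattern p) (mu : matching_fun n) i j :
  contains_at pi mu i j =
  (i + p <= j) && [forall s : 'I_p, Defs.arc mu (i + s).+1 (j + (pi^-1)%g s).+1].
Proof. by congr (_ && _); apply: eq_forallb => s; rewrite !addnS. Qed.

Section Occurrences.

Variables (n p : nat) (pi : pattern p).

Lemma contains_opener (mu : matching_fun n) i j u :
  contains_at pi mu i j -> u < p -> opener mu (i + u).
Proof.
rewrite contains_atE => /andP[_ /forallP arcs] hu.
exact: arc_opener (arcs (Ordinal hu)).
Qed.

Variable mu : matching_fun n.
Hypotheses (mu_matching : is_matching mu) (p_gt0 : 0 < p).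
Local Notation sigma := (run_reflect (2 * n) (opener mu)).

Lemma contains_reflect_runs i j :
  contains_at pi (reflect_runs mu) i j ->
  contains_at (pi * dec_pat p)%g mu (sigma (i + p.-1)) j.
Proof.
move=> hc; have op_i u : u < p -> opener mu (i + u).
  by rewrite -(opener_reflect_runs mu_matching); apply: contains_opener hc.
move: hc; rewrite !contains_atE => /andP[hij /forallP arcs].
have {}arcs (s : 'I_p) : Defs.arc mu (sigma (i + s)).+1 (j + (pi^-1)%g s).+1.
  by rewrite -(arc_reflect_runs mu_matching).
have shift (s : 'I_p) : sigma (i + rev_ord s) = sigma (i + p.-1) + s.
  have lt_s := ltn_ord s.
  rewrite (@run_reflect_shift _ _ (@opener_lt _ mu) (i + rev_ord s) s) => [|u /= hu].
    by rewrite (_ : i + rev_ord s + s = i + p.-1) //= -addnA; congr (i + _); lia.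
  have -> : u = i + (u - i) by lia.
  by apply: op_i; lia.
have j_closer : ~~ opener mu j.
  by have := arc_closer mu_matching (arcs (pi (Ordinal p_gt0))); rewrite permK addn0.
apply/andP; split.
  have lt_pred : p.-1 < p by rewrite ltn_predL.
  have := shift (Ordinal lt_pred); rewrite /= prednK // subnn => sigma_i.
  have : sigma (i + 0) < j by apply: run_reflect_lt (op_i 0 p_gt0) j_closer _; lia.
  lia.
apply/forallP => s; rewrite -shift invMg permM dec_pat_invg dec_patE.
exact: arcs.
Qed.

Lemma occ_reflect_runs_le : occ pi (reflect_runs mu) <= occ (pi * dec_pat p)%g mu.
Proof.
pose f (ij : 'I_(2 * n).+1 * 'I_(2 * n).+1) :=
  (inord (sigma (ij.1 + p.-1)) : 'I_(2 * n).+1, ij.2).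
have sigma_lt i j :
    contains_at pi (reflect_runs mu) i j -> sigma (i + p.-1) < (2 * n).+1.
  move/contains_opener => /(_ p.-1); rewrite ltn_predL opener_reflect_runs //.
  by move=> /(_ p_gt0); rewrite -(op_run_reflect (2 * n)) => /opener_lt /ltnW.
rewrite /occ -(card_in_imset (f := f)) => [|[i1 j1] [i2 j2]].
  apply/subset_leq_card/subsetP => _ /imsetP[[i j] hij ->].
  rewrite !inE /= in hij *; rewrite inordK ?(sigma_lt _ _ hij) //.
  exact: contains_reflect_runs.
rewrite !inE /= => h1 h2 [/(congr1 val)].
rewrite /= !inordK ?(sigma_lt _ _ h1) ?(sigma_lt _ _ h2) // => e ->.
move: e => /(inv_inj (run_reflectK (@opener_lt _ mu))) e.
by congr pair; apply: val_inj => /=; lia.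
Qed.

End Occurrences.

Lemma occ_reflect_runs n p (pi : pattern p) (mu : matching_fun n) :
  is_matching mu -> 0 < p -> occ pi (reflect_runs mu) = occ (pi * dec_pat p)%g mu.
Proof.
move=> mu_matching p_gt0; apply/eqP; rewrite eqn_leq occ_reflect_runs_le //=.
have := occ_reflect_runs_le (pi * dec_pat p)%g (reflect_runs_matching mu_matching) p_gt0.
by rewrite reflect_runsK mulg_dec_patK.
Qed.

Lemma a_count_swap n p k m (pi tau : pattern p) :
  a_count n k m pi tau = a_count n m k tau pi.
Proof. by apply: eq_card => mu; rewrite !inE; congr (_ && _); apply: andbC. Qed.

Lemma a_count_dec_pat_sym n p k m (pi : pattern p) : 0 < p ->
  a_count n k m pi (pi * dec_pat p)%g = a_count n k m (pi * dec_pat p)%g pi.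
Proof.
move=> p_gt0; rewrite /a_count -(card_preimset _ (inv_inj (@reflect_runsK n))).
apply: eq_card => mu; rewrite !inE.
case hmu: (is_matching mu); last by rewrite /reflect_runs hmu hmu.
by rewrite reflect_runs_matching // !occ_reflect_runs // mulg_dec_patK.
Qed.

Theorem corollary1 :
  (forall p : nat, 1 <= p ->
     forall n k m : nat,
       a_count n k m (inc_pat p) (dec_pat p) = a_count n k m (dec_pat p) (inc_pat p))
  /\
  (forall n k m : nat,
     (* k occurrences of 21 and m of 12  =  m occurrences of 21 and k of 12 *)
     a_count n k m (dec_pat 2) (inc_pat 2) = a_count n m k (dec_pat 2) (inc_pat 2)).
Proof.
have inc_dec p : 1 <= p -> forall n k m,
    a_count n k m (inc_pat p) (dec_pat p) = a_count n k m (dec_pat p) (inc_pat p).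
  move=> p_gt0 n k m.
  by have := a_count_dec_pat_sym n k m (inc_pat p) p_gt0; rewrite mul1g.
split=> // n k m.
by rewrite a_count_swap inc_dec.
Qed.
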